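(* Let $p_n(\mathbf y)$ be a linear sequence of symmetric functions of binomial type, and let $\theta$ be a shift-invariant linear operator on $\Lambda$. Then for every $n\ge0$, $$\theta\, p_n(\mathbf y)=\sum_{k=0}^n\binom nk\big(\epsilon\,\theta\, p_k(\mathbf y)\big)\,p_{n-k}(\mathbf y).$$
   Context: $\Lambda$ is the algebra of complex symmetric functions in $\mathbf y=(y_1,y_2,\dots)$. A linear sequence of symmetric functions of binomial type is $$p_n(\mathbf y)=\sum_{\lambda\vdash n}\frac{n!}{\prod_i\lambda_i!}\Big(\prod_ia_{\lambda_i}\Big)m_\lambda(\mathbf y)$$ for complex numbers $a_0=1,a_1\ne0,a_2,\dots$, where $m_\lambda$ is the monomial symmetric function. A linear operator $\theta$ on $\Lambda$ is shift-invariant if $E^a\theta=\theta E^a$ for all $a\in\mathbb C$, where $E^ap(y_1,\dots)=p(a,y_1,\dots)$. $\epsilon p=p(0,0,\dots)$. *)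

From HB Require Import structures.
From mathcomp Require Import all_boot all_algebra.
From mathcomp Require Import reals complex.
From mathcomp Require Import mpoly.

Set Implicit Arguments.
Unset Strict Implicit.
Unset Printing Implicit Defensive.

Import GRing.Theory.
Local Open Scope ring_scope.

(* Model of Lambda: a symmetric function in y = (y_1, y_2, ...) is the
   compatible family (F n)_n of its restrictions to n variables
   (y_{n+1} = y_{n+2} = ... = 0), i.e. Lambda is the graded inverse limit. *)

Section SymFun.
Variable K : fieldType.

Definition SF := forall n : nat, {mpoly K[n]}.

(* variable y_(i+1) of n+1 variables, seen in n variables, or 0 if i = n *)
Definition var_or0 (n : nat) (i : nat) : {mpoly K[n]} :=
  oapp (fun j : 'I_n => 'X_j) 0 (insub i).

(* set the last variable y_{n+1} to 0 *)
Definition restr (n : nat) (p : {mpoly K[n.+1]}) : {mpoly K[n]} :=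
  comp_mpoly [tuple var_or0 n (val i) | i < n.+1] p.

Definition isSym (F : SF) : Prop :=
  [/\ forall n, F n \is symmetric,
      forall n, restr (F n.+1) = F n
    & exists d : nat, forall n, (msize (F n) <= d)%N].

Definition sf_add (F G : SF) : SF := fun n => F n + G n.
Definition sf_scale (c : K) (F : SF) : SF := fun n => c *: F n.

(* E^a p (y_1, y_2, ...) = p (a, y_1, y_2, ...) *)
Definition shift (a : K) (F : SF) : SF := fun n =>
  comp_mpoly [tuple (if val i == 0%N then a%:MP else var_or0 n (val i).-1)
             | i < n.+1] (F n.+1).

(* epsilon p = p(0, 0, ...) *)
Definition eps (F : SF) : K := mcoeff 0%MM (F 0%N).

(* monomial symmetric function m_lambda (lambda a partition, given as a
   nonincreasing list of positive integers) *)
Definition mono (l : seq nat) : SF := fun n =>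
  \sum_(al : 'X_{1..n < (sumn l).+1}
          | sort geq [seq x <- tval (multinom_val (bmnm al)) | x != 0%N] == l)
     'X_[bmnm al].

(* p_n = sum_{lambda |- n} n!/prod_i lambda_i! (prod_i a_{lambda_i}) m_lambda.
   Partitions of n are enumerated as nonincreasing n-tuples with entries
   in {0..n} summing to n (zero padding removed). *)
Definition binom_seq (a : nat -> K) (n : nat) : SF := fun m =>
  \sum_(t : n.-tuple 'I_n.+1
          | sorted geq (map val t) && (sumn (map val t) == n))
     let l := [seq x <- map val t | x != 0%N] in
     ((n`!)%:R / (\prod_(x <- l) x`!)%:R * \prod_(x <- l) a x) *: mono l m.

End SymFun.

(* Evaluated at finitely many points, p_n is a coefficient of an exponential
   generating function:
     p_n(u_1, ..., u_m) = n! [t^n] \prod_i F(u_i t),   F(t) = \sum_k a_k t^k / k!.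
   Splitting the product shows that p_n is of binomial type,
     p_n(u_1, ..., u_k, y) = \sum_j C(n, j) p_j(u_1, ..., u_k) p_(n-j)(y),
   so E^(u_k) ... E^(u_1) p_n is a linear combination of p_0, ..., p_n.  Since theta is
   linear and commutes with the shifts,
     (theta p_n)(u) = eps (E^u theta p_n) = eps (theta E^u p_n)
                    = \sum_j C(n, j) p_j(u) eps (theta p_(n-j)),
   and over a field of characteristic 0 a polynomial is determined by its values. *)

From HB Require Import structures.
From mathcomp Require Import all_boot all_algebra.
From mathcomp Require Import reals complex.
From mathcomp Require Import perm mpoly.
From mathcomp Require Import ring.
From Stdlib Require Import FunctionalExtensionality.
Import GRing.Theory Num.Theory.
Local Open Scope ring_scope.

Set Implicit Arguments.
Unset Strict Implicit.
Unset Printing Implicit Defensive.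

Section PolyIdentity.
Variable K : numDomainType.

Lemma poly_horner_eq0 (p : {poly K}) : (forall x, p.[x] = 0) -> p = 0.
Proof.
move=> p0; apply/eqP/contraT => nz_p.
have uniq_nat : uniq (mkseq (fun i => i%:R : K) (size p)).
  by rewrite map_inj_uniq ?iota_uniq // => i j /eqP; rewrite eqr_nat => /eqP.
have roots_nat : all (root p) (mkseq (fun i => i%:R : K) (size p)).
  by apply/allP => x _; apply/eqP/p0.
by have := max_poly_roots nz_p roots_nat uniq_nat; rewrite size_mkseq ltnn.
Qed.

Definition snocv m (v : 'I_m -> K) (x : K) (i : 'I_m.+1) : K :=
  if insub (val i) is Some j then v j else x.

Lemma meval_snocv m (p : {mpoly K[m.+1]}) v x :
  p.@[snocv v x] = (map_poly (meval v) (muni p)).[x].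
Proof.
rewrite muniE mevalE raddf_sum horner_sum; apply: eq_bigr => al _.
rewrite [X in X.[x]]/= map_polyZ hornerZ map_polyXn hornerXn /=.
rewrite mevalZ mevalX big_ord_recr /= /snocv insubF ?ltnn // -mulrA.
congr (_ * (_ * _)); apply: eq_bigr => i _.
by rewrite mnmE insubT ?ltn_ord //= => lt_im; congr (v _ ^+ _); apply: val_inj.
Qed.

Definition mtail m (al : 'X_{1..m.+1}) : 'X_{1..m} :=
  [multinom al (widen_ord (leqnSn m) i) | i < m].

Lemma mnm_eq_tail m (al be : 'X_{1..m.+1}) :
  (al == be) = (mtail al == mtail be) && (al ord_max == be ord_max).
Proof.
apply/eqP/andP => [-> //|[/eqP eq_tail /eqP eq_max]].
apply/mnmP => i; case: (unliftP ord_max i) => [j ->|-> //].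
have := congr1 (fun t : 'X_{1..m} => t j) eq_tail; rewrite !mnmE.
suff -> : lift ord_max j = widen_ord (leqnSn m) j by [].
by apply: val_inj; rewrite /= /bump leqNgt ltn_ord.
Qed.

Lemma mcoeff_muni m (p : {mpoly K[m.+1]}) al :
  ((muni p)`_(al ord_max))@_(mtail al) = p@_al.
Proof.
rewrite {2}(mpolyE p) muniE coef_sum !raddf_sum /=; apply: eq_bigr => be _.
rewrite coefZ coefXn mcoeffZ mcoeffX (eq_sym be) mnm_eq_tail.
case: (al ord_max == be ord_max); last by rewrite mulr0 mcoeff0 andbF mulr0.
by rewrite mulr1 mcoeffZ mcoeffX andbT eq_sym.
Qed.

Lemma mpoly_meval_eq0 m (p : {mpoly K[m]}) : (forall v, p.@[v] = 0) -> p = 0.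
Proof.
elim: m p => [|m IHm] p p0.
  have := p0 (fun _ => 0); rewrite {1}(nvar0_mpolyC p) mevalC => p0_0.
  by rewrite (nvar0_mpolyC p) p0_0 mpolyC0.
have muni0 : muni p = 0.
  apply/polyP => k; rewrite coef0; apply: IHm => v.
  have muni_v0 : map_poly (meval v) (muni p) = 0.
    by apply: poly_horner_eq0 => x; rewrite -meval_snocv p0.
  by have := congr1 (fun P : {poly K} => P`_k) muni_v0; rewrite coef_map coef0.
by apply/mpolyP => al; rewrite mcoeff0 -mcoeff_muni muni0 coef0 mcoeff0.
Qed.

Lemma eq_mpoly_meval m (p q : {mpoly K[m]}) :
  (forall v, p.@[v] = q.@[v]) -> p = q.
Proof.
move=> pq; apply/eqP; rewrite -subr_eq0; apply/eqP/mpoly_meval_eq0 => v.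
by rewrite mevalB pq subrr.
Qed.

Lemma eq_mpoly_meval_nat m (p q : {mpoly K[m]}) :
    (forall w : nat -> K, p.@[fun i : 'I_m => w i] = q.@[fun i : 'I_m => w i]) ->
  p = q.
Proof.
move=> pq; apply: eq_mpoly_meval => v.
have v_nat : v =1 (fun i : 'I_m => oapp v 0 (insub (val i))).
  by move=> i; rewrite valK.
rewrite (meval_eq p v_nat) (meval_eq q v_nat).
exact: (pq (fun j => oapp v 0 (insub j))).
Qed.

End PolyIdentity.

Lemma eq_coef_prod (R : nzRingType) (I : Type) (r : seq I) (P Q : I -> {poly R}) k :
    (forall i j, (j <= k)%N -> (P i)`_j = (Q i)`_j) ->
  forall j, (j <= k)%N -> (\prod_(i <- r) P i)`_j = (\prod_(i <- r) Q i)`_j.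
Proof.
move=> PQ; elim: r => [|i r IHr] j le_jk; first by rewrite !big_nil.
rewrite !big_cons !coefM; apply: eq_bigr => l _.
have le_lk : (l <= k)%N := leq_trans (ltnSE (ltn_ord l)) le_jk.
by rewrite PQ // IHr // (leq_trans (leq_subr l j) le_jk).
Qed.

Lemma sumr_eqb (R : nzSemiRingType) (I : finType) (P : pred I) (j : I) :
  \sum_(i | P i) ((i == j)%:R : R) = (P j)%:R.
Proof.
rewrite big_mkcond (bigD1 j) //= eqxx big1 => [|i /negbTE ->]; last by case: (P i).
by case: (P j); rewrite addr0.
Qed.

Section BinomialValue.
Variables (K : fieldType) (a : nat -> K).
Implicit Types u : nat -> K.

Definition egf N (c : K) : {poly K} := \poly_(k < N) (a k / k`!%:R * c ^+ k).

Definition binom_val n m (u : nat -> K) : K :=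
  n`!%:R * (\prod_(i < m) egf n.+1 (u i))`_n.

Lemma binom_val_trunc n m N u : (n < N)%N ->
  n`!%:R * (\prod_(i < m) egf N (u i))`_n = binom_val n m u.
Proof.
move=> lt_nN; rewrite /binom_val; congr (_ * _).
apply: (eq_coef_prod _ (k := n)) => // i j le_jn.
by rewrite !coef_poly ltnS le_jn (leq_ltn_trans le_jn lt_nN).
Qed.

Lemma eq_binom_val n m u u' :
  (forall i, (i < m)%N -> u i = u' i) -> binom_val n m u = binom_val n m u'.
Proof. by move=> uu'; rewrite /binom_val; under eq_bigr => i _ do rewrite uu' //. Qed.

Lemma binom_valD n m1 m2 u : binom_val n (m1 + m2) u =
  \sum_(j < n.+1) 'C(n, j)%:R * binom_val j m1 u *
                  binom_val (n - j) m2 (fun i => u (m1 + i)%N).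
Proof.
rewrite {1}/binom_val big_split_ord coefM mulr_sumr; apply: eq_bigr => j _.
have lt_nj_n : (n - j < n.+1)%N by rewrite ltnS leq_subr.
rewrite -(binom_val_trunc _ _ (ltn_ord j)) -(binom_val_trunc _ _ lt_nj_n).
by rewrite -(bin_fact (ltn_ord j : (j <= n)%N)) !natrM; ring.
Qed.

Lemma binom_val_expand n m u : binom_val n m u =
  n`!%:R * \sum_(f : {ffun 'I_m -> 'I_n.+1} | (\sum_i (f i : nat) == n)%N)
             \prod_i (a (f i) / (f i)`!%:R * u i ^+ f i).
Proof.
rewrite /binom_val /egf; congr (_ * _).
under eq_bigr do rewrite poly_def.
rewrite bigA_distr_bigA /= coef_sum [RHS]big_mkcond /=; apply: eq_bigr => f _.
under eq_bigr do rewrite -mul_polyC.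
rewrite big_split /= -rmorph_prod prodrXr coefCM coefXn eq_sym.
by case: eqP; rewrite ?mulr1 ?mulr0.
Qed.

Hypothesis a0 : a 0%N = 1.

Lemma egf0 N : (0 < N)%N -> egf N 0 = 1.
Proof.
move=> N_gt0; apply/polyP => k; rewrite coef_poly coef1.
case: k => [|k]; first by rewrite N_gt0 a0 expr0 mulr1 divr1.
by rewrite expr0n mulr0; case: ifP.
Qed.

Lemma binom_valS0 n m u : u m = 0 -> binom_val n m.+1 u = binom_val n m u.
Proof. by move=> um0; rewrite /binom_val big_ord_recr /= um0 egf0 // mulr1. Qed.

End BinomialValue.

Section Partitions.
Implicit Types (s : seq nat) (n k : nat).

Definition nonzeros s := [seq x <- s | x != 0%N].

Definition pad0 n s := s ++ nseq (n - size s) 0%N.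

Lemma sumn_nonzeros s : sumn (nonzeros s) = sumn s.
Proof. by elim: s => //= x s IHs; case: eqP => [->|_] /=; rewrite IHs. Qed.

Lemma nonzeros_pad0 n s : all (fun x => x != 0%N) s -> nonzeros (pad0 n s) = s.
Proof.
move=> s_nz; rewrite /nonzeros filter_cat (all_filterP s_nz).
by rewrite -[RHS]cats0; congr (_ ++ _); elim: (n - size s)%N.
Qed.

Lemma sorted_pad0 n s : sorted geq s -> sorted geq (pad0 n s).
Proof.
rewrite /pad0 !(sorted_pairwise (rev_trans leq_trans)) pairwise_cat => -> /=.
apply/andP; split; first by apply/allrelP => x y _ /nseqP[-> _].
by elim: (n - size s)%N => //= k ->; rewrite andbT; apply/allP => y /nseqP[-> _].
Qed.

Lemma sorted_geq_pad0 s : sorted geq s -> s = pad0 (size s) (nonzeros s).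
Proof.
elim: s => //= x s IHs x_s; have s_sorted := path_sorted x_s.
case: eqP => [x0|_] /=; last by rewrite [s in x :: s]IHs // /pad0 subSS.
have /all_pred1P s0 : all (pred1 0%N) s.
  move: (order_path_min (rev_trans leq_trans) x_s); rewrite x0.
  by apply: sub_all => y; rewrite /= leqn0.
rewrite x0 s0 /pad0 /= size_nseq.
by have -> : nonzeros (nseq (size s) 0%N) = [::] by elim: (size s).
Qed.

Lemma size_le_sumn s : all (fun x => x != 0%N) s -> (size s <= sumn s)%N.
Proof.
elim: s => //= x s IHs /andP[x_nz /IHs le_s].
by rewrite -add1n; apply: leq_add; rewrite // lt0n.
Qed.

Lemma nth_le_sumn s i : (nth 0%N s i <= sumn s)%N.
Proof.
elim: s i => [|x s IHs] [|i] //=; first exact: leq_addr.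
exact: leq_trans (IHs i) (leq_addl _ _).
Qed.

Lemma partition_tuple_unique n s :
    sorted geq s -> all (fun x => x != 0%N) s -> sumn s = n ->
  exists t0 : n.-tuple 'I_n.+1, forall t : n.-tuple 'I_n.+1,
    (sorted geq (map val t) && (sumn (map val t) == n)) &&
      (s == nonzeros (map val t)) = (t == t0).
Proof.
move=> s_sorted s_nz s_n.
have s_size : (size s <= n)%N by rewrite -s_n size_le_sumn.
pose t0 : n.-tuple 'I_n.+1 := [tuple inord (nth 0%N s i) | i < n].
have t0_pad : map val t0 = pad0 n s.
  apply: (@eq_from_nth _ 0%N) => [|i].
    by rewrite size_map size_tuple size_cat size_nseq subnKC.
  rewrite size_map size_tuple => lt_in; rewrite (nth_map ord0) ?size_tuple //.
  rewrite -(tnth_nth ord0 t0 (Ordinal lt_in)) tnth_mktuple /=.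
  rewrite inordK ?ltnS -?s_n ?nth_le_sumn // nth_cat.
  by case: ltnP => // le_si; rewrite nth_nseq nth_default // if_same.
exists t0 => t; apply/idP/eqP => [/andP[/andP[t_sorted _] /eqP s_t]|->].
  apply/val_inj/(inj_map val_inj) => /=.
  by rewrite t0_pad [LHS](sorted_geq_pad0 t_sorted) -s_t size_map size_tuple.
by rewrite t0_pad sorted_pad0 // sumn_cat sumn_nseq mul0n addn0 s_n nonzeros_pad0 ?eqxx.
Qed.

End Partitions.

Lemma sum_partition_tuples (R : nzSemiRingType) n s :
    sorted geq s -> all (fun x => x != 0%N) s ->
  \sum_(t : n.-tuple 'I_n.+1 | sorted geq (map val t) && (sumn (map val t) == n))
     ((s == nonzeros (map val t))%:R : R) = (sumn s == n)%:R.
Proof.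
move=> s_sorted s_nz; case: (eqVneq (sumn s) n) => [s_n|s_n]; last first.
  rewrite big1 // => t /andP[_ /eqP t_n]; case: eqP => // s_t.
  by move: s_n; rewrite s_t sumn_nonzeros t_n eqxx.
have [t0 t0_unique] := partition_tuple_unique s_sorted s_nz s_n.
rewrite big_mkcond (eq_bigr (fun t => (t == t0)%:R)) ?sumr_eqb // => t _.
by rewrite -t0_unique; case: (_ && _).
Qed.

Section MonomialPartition.
Variable m : nat.
Implicit Type al : 'X_{1..m}.

Definition mpartition al := sort geq (nonzeros (tval (multinom_val al))).

Lemma perm_mpartition al :
  perm_eq (mpartition al) (nonzeros (tval (multinom_val al))).
Proof. by rewrite perm_sort. Qed.

Lemma sorted_mpartition al : sorted geq (mpartition al).
Proof. by apply: sort_sorted => x y; exact: leq_total. Qed.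

Lemma mpartition_nonzero al : all (fun x => x != 0%N) (mpartition al).
Proof. by rewrite (perm_all _ (perm_mpartition al)) filter_all. Qed.

Lemma sumn_mpartition al : sumn (mpartition al) = mdeg al.
Proof. by rewrite (perm_sumn (perm_mpartition al)) sumn_nonzeros /mdeg sumnE. Qed.

Lemma big_mpartition (R : Type) (idx : R) (op : Monoid.com_law idx) al f :
  f 0%N = idx ->
  \big[op/idx]_(x <- mpartition al) f x = \big[op/idx]_(i < m) f (al i).
Proof.
move=> f0; rewrite (perm_big _ (perm_mpartition al)) big_filter big_mkcond.
rewrite big_tuple /=.
apply: eq_bigr => i _; have -> : al i = tnth al i by [].
by case: eqP => [->|]; rewrite ?f0.
Qed.

Lemma mcoeff_mono (K : fieldType) l al : (@mono K l m)@_al = (mpartition al == l)%:R.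
Proof.
rewrite /mono raddf_sum /=; under eq_bigr do rewrite mcoeffX.
case: (ltnP (mdeg al) (sumn l).+1) => [al_lt|al_ge].
  rewrite (eq_bigr (fun be => (be == BMultinom al_lt)%:R)) => [|be _].
    by rewrite sumr_eqb.
  by rewrite bmeqP.
rewrite big1 => [|be _].
  by case: eqP => // al_l; move: al_ge; rewrite -sumn_mpartition al_l ltnn.
by case: eqP => // be_al; move: (bmdeg be); rewrite be_al ltnNge al_ge.
Qed.

End MonomialPartition.

Lemma sum_mdeg_eq_ffun (R : nzSemiRingType) m n (F : 'I_m -> nat -> R) :
  \sum_(al : 'X_{1..m < n.+1} | mdeg al == n) \prod_i F i (al i) =
  \sum_(f : {ffun 'I_m -> 'I_n.+1} | (\sum_i (f i : nat) == n)%N) \prod_i F i (f i).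
Proof.
have al_lt (al : 'X_{1..m < n.+1}) i : (al i < n.+1)%N.
  by apply: leq_ltn_trans (bmdeg al); rewrite mdegE (bigD1 i) //= leq_addr.
pose to_ffun (al : 'X_{1..m < n.+1}) : {ffun 'I_m -> 'I_n.+1} :=
  [ffun i => Ordinal (al_lt al i)].
pose of_ffun (f : {ffun 'I_m -> 'I_n.+1}) : 'X_{1..m < n.+1} :=
  insubd bm0 [multinom (f i : nat) | i < m].
have to_ffunE al i : (to_ffun al i : nat) = al i by rewrite ffunE.
have of_ffunK (f : {ffun 'I_m -> 'I_n.+1}) :
    (\sum_i (f i : nat) == n)%N -> to_ffun (of_ffun f) = f.
  move=> f_n; apply/ffunP => i; apply: ord_inj; rewrite to_ffunE /of_ffun val_insubd.
  by rewrite mdegE; under eq_bigr do rewrite mnmE; rewrite (eqP f_n) ltnSn mnmE.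
have to_ffunK al : of_ffun (to_ffun al) = al.
  apply: val_inj; rewrite /of_ffun val_insubd.
  have -> : [multinom (to_ffun al i : nat) | i < m] = al.
    by apply/mnmP => i; rewrite mnmE to_ffunE.
  by rewrite bmdeg.
rewrite [RHS](reindex_onto to_ffun of_ffun of_ffunK) /=.
apply: eq_big => [al|al _]; last by apply: eq_bigr => i _; rewrite to_ffunE.
rewrite to_ffunK eqxx andbT mdegE.
by under [in RHS]eq_bigr do rewrite to_ffunE.
Qed.

Section BinomSeqCoef.
Variables (K : fieldType) (a : nat -> K).
Hypothesis a0 : a 0%N = 1.

Definition binom_coef n m (al : 'X_{1..m}) : K :=
  n`!%:R / (\prod_(i < m) (al i)`!)%:R * \prod_(i < m) a (al i).

Lemma mcoeff_binom_seq n m (al : 'X_{1..m}) :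
  (binom_seq a n m)@_al = (mdeg al == n)%:R * binom_coef n al.
Proof.
rewrite /binom_seq raddf_sum /=.
under eq_bigr do rewrite mcoeffZ mcoeff_mono.
pose c (l : seq nat) : K := n`!%:R / (\prod_(x <- l) x`!)%:R * \prod_(x <- l) a x.
rewrite (eq_bigr (fun t : n.-tuple 'I_n.+1 => c (mpartition al) *
  (mpartition al == nonzeros (map val t))%:R)) => [|t _]; last first.
  by case: eqP => [<-|]; rewrite ?mulr0.
rewrite -mulr_sumr sum_partition_tuples ?sorted_mpartition ?mpartition_nonzero //.
rewrite sumn_mpartition mulrC /c /binom_coef.
by rewrite !big_mpartition ?a0.
Qed.

Lemma msize_binom_seq n m : (msize (binom_seq a n m) <= n.+1)%N.
Proof.
rewrite msizeE; apply/bigmax_leqP_seq => al; rewrite mcoeff_msupp mcoeff_binom_seq.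
by case: (eqVneq (mdeg al) n) => [-> //|]; rewrite mul0r eqxx.
Qed.

Lemma meval_binom_seq n m (u : nat -> K) :
  (binom_seq a n m).@[fun i : 'I_m => u i] = binom_val a n m u.
Proof.
rewrite binom_val_expand.
rewrite -(@sum_mdeg_eq_ffun _ m n (fun i k => a k / k`!%:R * u i ^+ k)) mulr_sumr.
rewrite (mpolywE (msize_binom_seq n m)) raddf_sum [RHS]big_mkcond /=.
apply: eq_bigr => al _; rewrite mevalZ mevalX mcoeff_binom_seq.
case: eqP => _; rewrite ?mul0r // mul1r /binom_coef !big_split /=.
by rewrite prodfV natr_prod; ring.
Qed.

Lemma symmetric_binom_seq n m : binom_seq a n m \is symmetric.
Proof.
apply/issymP => s; apply/mpolyP => al.
rewrite mcoeff_sym !mcoeff_binom_seq mdeg_mperm /binom_coef.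
have big_perm (T : Type) (idx : T) (op : Monoid.com_law idx) (f : nat -> T) :
    \big[op/idx]_(i < m) f ([multinom al (s j) | j < m] i) =
    \big[op/idx]_(i < m) f (al i).
  rewrite [RHS](reindex_inj (@perm_inj _ s)).
  by apply: eq_bigr => i _; rewrite mnmE.
by rewrite !big_perm.
Qed.

End BinomSeqCoef.

Section Evaluation.
Variable K : fieldType.
Implicit Types (F G : SF K) (u w : nat -> K).

Definition sf_eval F m w : K := (F m).@[fun i : 'I_m => w i].

Lemma eq_sf_eval F m w w' :
  (forall i, (i < m)%N -> w i = w' i) -> sf_eval F m w = sf_eval F m w'.
Proof. by move=> ww'; apply: meval_eq => i; apply/ww'/ltn_ord. Qed.

Lemma meval_var_or0 m k w :
  (@var_or0 K m k).@[fun i : 'I_m => w i] = if (k < m)%N then w k else 0.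
Proof.
rewrite /var_or0; case: insubP => [j _ <-|/negbTE->] /=; last exact: meval0.
by rewrite mevalXU ltn_ord.
Qed.

Lemma sf_eval_shift x F n w :
  sf_eval (shift x F) n w = sf_eval F n.+1 (fun i => if i is j.+1 then w j else x).
Proof.
rewrite /sf_eval /shift comp_mpoly_meval; apply: meval_eq => -[[|i] lt_in] /=.
  by rewrite tnth_mktuple mevalC.
by rewrite tnth_mktuple meval_var_or0 -ltnS lt_in.
Qed.

Lemma eps_sf_eval F w : eps F = sf_eval F 0 w.
Proof. by rewrite /sf_eval /eps {2}(nvar0_mpolyC (F 0%N)) mevalC. Qed.

Fixpoint shifts u k F : SF K :=
  if k is k'.+1 then shift (u k') (shifts u k' F) else F.

Definition catv k u w (i : nat) : K := if (i < k)%N then u i else w (i - k)%N.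

Lemma sf_eval_shifts u k F n w :
  sf_eval (shifts u k F) n w = sf_eval F (k + n) (catv k u w).
Proof.
elim: k n w => [|k IHk] n w /=.
  by apply: eq_sf_eval => i _; rewrite /catv subn0.
rewrite sf_eval_shift IHk addSnnS; apply: eq_sf_eval => i _; rewrite /catv.
case: (ltngtP i k) => [lt_ik|lt_ki|->]; first by rewrite ltnS ltnW.
  by rewrite ltnS leqNgt lt_ki /= -(subnSK lt_ki).
by rewrite subnn ltnSn.
Qed.

Lemma eps_shifts u m F : eps (shifts u m F) = sf_eval F m u.
Proof.
rewrite (eps_sf_eval _ (fun _ => 0)) sf_eval_shifts addn0.
by apply: eq_sf_eval => i lt_im; rewrite /catv lt_im.
Qed.

Lemma isSym_add F G : isSym F -> isSym G -> isSym (sf_add F G).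
Proof.
case=> F_sym F_restr [dF F_size] [G_sym G_restr [dG G_size]]; split => [n|n|].
- exact: rpredD (F_sym n) (G_sym n).
- by rewrite /sf_add /restr comp_mpolyD -/(restr _) -/(restr _) F_restr G_restr.
exists (maxn dF dG) => n; apply: leq_trans (msizeD_le _ _) _.
by rewrite geq_max !leq_max F_size G_size orbT.
Qed.

Lemma isSym_scale c F : isSym F -> isSym (sf_scale c F).
Proof.
case=> F_sym F_restr [d F_size]; split => [n|n|].
- exact: rpredZ (F_sym n).
- by rewrite /sf_scale /restr comp_mpolyZ -/(restr _) F_restr.
by exists d => n; apply: leq_trans (msizeZ_le _ _) _.
Qed.

End Evaluation.

Section BinomialShifts.
Variables (K : numFieldType) (a : nat -> K).
Hypothesis a0 : a 0%N = 1.

Lemma sf_evalP (F G : SF K) : F = G <-> forall m w, sf_eval F m w = sf_eval G m w.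
Proof.
split=> [-> //|FG]; apply: functional_extensionality_dep => m.
by apply: eq_mpoly_meval_nat => w; apply: FG.
Qed.

Lemma restr_binom_seq n m : restr (binom_seq a n m.+1) = binom_seq a n m.
Proof.
apply: eq_mpoly_meval_nat => w.
set w0 := fun j => if (j < m)%N then w j else 0.
rewrite /restr comp_mpoly_meval (meval_eq (v2 := fun i : 'I_m.+1 => w0 i)).
  rewrite !meval_binom_seq // (binom_valS0 a0); last by rewrite /w0 ltnn.
  by apply: eq_binom_val => i lt_im; rewrite /w0 lt_im.
by move=> i; rewrite tnth_mktuple meval_var_or0.
Qed.

Lemma isSym_binom_seq n : isSym (binom_seq a n).
Proof.
split=> [m|m|]; [exact: symmetric_binom_seq | exact: restr_binom_seq |].
by exists n.+1 => m; apply: msize_binom_seq.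
Qed.

Definition binom_comb (c : nat -> K) (g : nat -> nat) N : SF K :=
  fun m => \sum_(j < N) c j *: binom_seq a (g j) m.

Lemma binom_comb0 c g : binom_comb c g 0 = sf_scale 0 (binom_seq a 0).
Proof.
apply: functional_extensionality_dep => m.
by rewrite /binom_comb big_ord0 /sf_scale scale0r.
Qed.

Lemma binom_combS c g N : binom_comb c g N.+1 =
  sf_add (binom_comb c g N) (sf_scale (c N) (binom_seq a (g N))).
Proof.
by apply: functional_extensionality_dep => m; rewrite /binom_comb big_ord_recr.
Qed.

Lemma isSym_binom_comb c g N : isSym (binom_comb c g N).
Proof.
elim: N => [|N IHN]; first by rewrite binom_comb0; apply/isSym_scale/isSym_binom_seq.
by rewrite binom_combS; apply: isSym_add => //; apply/isSym_scale/isSym_binom_seq.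
Qed.

Lemma shifts_binom_seq u k n : shifts u k (binom_seq a n) =
  binom_comb (fun j => 'C(n, j)%:R * binom_val a j k u) (fun j => n - j)%N n.+1.
Proof.
apply/sf_evalP => m w; rewrite sf_eval_shifts /sf_eval meval_binom_seq // binom_valD.
rewrite /binom_comb raddf_sum /=; apply: eq_bigr => j _.
rewrite mevalZ meval_binom_seq //; congr (_ * _ * _); apply: eq_binom_val => i lt_i.
  by rewrite /catv lt_i.
by rewrite /catv ltnNge leq_addr /= addKn.
Qed.

End BinomialShifts.

Section ShiftInvariantOperator.
Variables (K : numFieldType) (a : nat -> K) (theta : SF K -> SF K).
Hypothesis a0 : a 0%N = 1.
Hypothesis theta_add : forall F G, isSym F -> isSym G ->
  theta (sf_add F G) = sf_add (theta F) (theta G).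
Hypothesis theta_scale : forall (c : K) F, isSym F ->
  theta (sf_scale c F) = sf_scale c (theta F).
Hypothesis theta_shift : forall (x : K) F, isSym F ->
  theta (shift x F) = shift x (theta F).

Lemma theta_binom_comb c g N m :
  theta (binom_comb a c g N) m = \sum_(j < N) c j *: theta (binom_seq a (g j)) m.
Proof.
have p_sym k : isSym (binom_seq a k) := isSym_binom_seq a0 k.
elim: N => [|N IHN].
  by rewrite binom_comb0 (theta_scale _ (p_sym _)) /sf_scale big_ord0 scale0r.
rewrite binom_combS theta_add; last exact: isSym_scale.
  by rewrite (theta_scale _ (p_sym _)) /sf_add /= IHN big_ord_recr.
exact: isSym_binom_comb.
Qed.

Lemma theta_shifts u k n :
  theta (shifts u k (binom_seq a n)) = shifts u k (theta (binom_seq a n)).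
Proof.
elim: k => [|k IHk] //=.
rewrite theta_shift; first by rewrite IHk.
rewrite shifts_binom_seq //; exact: isSym_binom_comb.
Qed.

Lemma theta_binom_seq n : theta (binom_seq a n) =
  fun m => \sum_(k < n.+1)
             ('C(n, k)%:R * eps (theta (binom_seq a k))) *: binom_seq a (n - k) m.
Proof.
apply/sf_evalP => m w.
rewrite -eps_shifts -theta_shifts shifts_binom_seq // /eps theta_binom_comb.
rewrite /sf_eval !raddf_sum /=.
under eq_bigr do rewrite mcoeffZ.
under [RHS]eq_bigr do rewrite mevalZ meval_binom_seq //.
rewrite [RHS](reindex_inj rev_ord_inj) /=; apply: eq_bigr => j _.
have le_jn : (j <= n)%N := ltn_ord j.
by rewrite subSS subKn // bin_sub // mulrAC.
Qed.

End ShiftInvariantOperator.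

Theorem mainTheorem12 (R : realType) (a : nat -> R[i])
    (theta : SF R[i] -> SF R[i])
    (ha0 : a 0%N = 1) (ha1 : a 1%N != 0)
    (hmaps : forall F, isSym F -> isSym (theta F))
    (hadd : forall F G, isSym F -> isSym G ->
              theta (sf_add F G) = sf_add (theta F) (theta G))
    (hscale : forall (c : R[i]) F, isSym F ->
              theta (sf_scale c F) = sf_scale c (theta F))
    (hshift : forall (x : R[i]) F, isSym F ->
              theta (shift x F) = shift x (theta F)) :
  forall n : nat,
    theta (binom_seq a n) =
    (fun m => \sum_(k < n.+1)
                (('C(n, k))%:R * eps (theta (binom_seq a k)))
                  *: binom_seq a (n - k) m).
Proof.
exact: theta_binom_seq.
Qed.
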